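(* Consider a linear scoring model on items with feature vectors $x_i\in\mathbb{R}^d$ and weight vector $w\in\mathbb{R}^d$, with scores $s_i=\sum_{f=1}^d w_f x_{if}$. For a pair of items $(i,j)$ put $\Delta_{ij}^{(f)}=w_f(x_{if}-x_{jf})$ and $Z_{ij}=\sum_{f=1}^d|\Delta_{ij}^{(f)}|$, and suppose $Z_{ij}>0$. Let $\{\Psi^{(d)}\}_{d\ge1}$ be any family of maps $\Psi^{(d)}:\mathbb{R}^d_{\ge0}\setminus\{0\}\to\Delta^{d-1}$ (values in the standard simplex) satisfying refinement consistency: for every $d$, every $a\in\mathbb{R}^d_{\ge0}\setminus\{0\}$, every $k$ and every $r,q\ge0$ with $r+q=a_k$, the vector $a^{[k\to(r,q)]}=(a_1,\dots,a_{k-1},r,q,a_{k+1},\dots,a_d)$ satisfies, if $a_k>0$, $\Psi^{(d+1)}(a^{[k\to(r,q)]})=(\Psi^{(d)}_1(a),\dots,\Psi^{(d)}_{k-1}(a),\frac{r}{a_k}\Psi^{(d)}_k(a),\frac{q}{a_k}\Psi^{(d)}_k(a),\Psi^{(d)}_{k+1}(a),\dots,\Psi^{(d)}_d(a))$, and, if $a_k=0$, $\Psi^{(d+1)}(a^{[k\to(0,0)]})$ agrees with $\Psi^{(d)}(a)$ on non-refined coordinates and is $0$ on the two refined coordinates. Then, with $a_f=|\Delta_{ij}^{(f)}|$, for every $f$, \[ \Psi^{(d)}_f(a)=\rho_{ij}^{(f)}:=\frac{|\Delta_{ij}^{(f)}|}{Z_{ij}}. \] That is, the influence share $\rho_{ij}^{(f)}$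 is the unique refinement-consistent local budgeting rule for linear pairwise effort.
   Context: $\Delta^{d-1}$ denotes the standard simplex $\{p\in\mathbb{R}^d_{\ge0}:\sum_f p_f=1\}$. A pair with $Z_{ij}>0$ is called informative; $\rho_{ij}^{(f)}$ is the local influence share of factor $f$. *)

From HB Require Import structures.
From mathcomp Require Import all_boot all_order all_algebra.
Set Implicit Arguments. Unset Strict Implicit. Unset Printing Implicit Defensive.
Import Order.TTheory GRing.Theory Num.Theory.
Local Open Scope ring_scope.

Section Defs.
Variable R : realFieldType.

Definition nonneg_nonzero (d : nat) (a : 'I_d -> R) : Prop :=
  (forall f, 0 <= a f) /\ (exists f, a f != 0).

Definition in_simplex (d : nat) (p : 'I_d -> R) : Prop :=
  (forall f, 0 <= p f) /\ \sum_(f < d) p f = 1.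

(* 0-based nat access to a vector (0 outside the range) *)
Definition vat (d : nat) (a : 'I_d -> R) (n : nat) : R :=
  if insub n is Some i then a i else 0.

(* a^{[k -> (r,q)]} = (a_1,...,a_{k-1}, r, q, a_{k+1}, ..., a_d)  (0-based k) *)
Definition refine (d : nat) (a : 'I_d -> R) (k : 'I_d) (r q : R) :
  'I_d.+1 -> R :=
  fun j => if (j < k)%N then vat a j
           else if (j == k :> nat) then r
           else if (j == k.+1 :> nat) then q
           else vat a j.-1.

Definition refinement_consistent
  (Psi : forall d : nat, ('I_d -> R) -> 'I_d -> R) : Prop :=
  forall (d : nat) (a : 'I_d -> R) (k : 'I_d) (r q : R),
    nonneg_nonzero a -> 0 <= r -> 0 <= q -> r + q = a k ->
    (0 < a k ->
       Psi d.+1 (refine a k r q) =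
       refine (Psi d a) k (r / a k * Psi d a k) (q / a k * Psi d a k)) /\
    (a k = 0 ->
       (forall j : 'I_d.+1, j != k :> nat -> j != k.+1 :> nat ->
          Psi d.+1 (refine a k 0 0) j = refine (Psi d a) k 0 0 j) /\
       Psi d.+1 (refine a k 0 0) (inord k) = 0 /\
       Psi d.+1 (refine a k 0 0) (inord k.+1) = 0).

Definition score (d : nat) (w xi : 'I_d -> R) : R := \sum_(f < d) w f * xi f.
Definition Delta (d : nat) (w xi xj : 'I_d -> R) (f : 'I_d) : R :=
  w f * (xi f - xj f).
Definition Zpair (d : nat) (w xi xj : 'I_d -> R) : R :=
  \sum_(f < d) `|Delta w xi xj f|.
Definition rho (d : nat) (w xi xj : 'I_d -> R) (f : 'I_d) : R :=
  `|Delta w xi xj f| / Zpair w xi xj.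

End Defs.

From mathcomp Require Import all_boot all_order all_algebra.
From Stdlib Require Import FunctionalExtensionality.
Set Implicit Arguments. Unset Strict Implicit. Unset Printing Implicit Defensive.
Import Order.TTheory GRing.Theory Num.Theory.
Local Open Scope ring_scope.

(* In dimension one the simplex constraint forces
   the share 1.  A vector b of dimension d + 2 is the refinement, at the first
   coordinate, of the vector of dimension d + 1 obtained by merging b_1 and b_2;
   the merged vector has the same total, so by induction its shares are
   proportional, and refinement consistency transports proportionality to b. *)

Section Refine.
Variable R : realFieldType.

Lemma nonneg_nonzero_sum_gt0 d (a : 'I_d -> R) :
  (forall f, 0 <= a f) -> 0 < \sum_f a f -> nonneg_nonzero a.
Proof.
move=> a_ge0 sum_gt0; split=> //; apply/existsP.
apply: contraTT sum_gt0 => /existsPn a_eq0.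
by rewrite big1 ?ltxx // => f _; apply/eqP/negbNE/a_eq0.
Qed.

Lemma refine_mulr d (a : 'I_d -> R) k r q c j :
  refine (fun f => a f * c) k (r * c) (q * c) j = refine a k r q j * c.
Proof.
have vat_mulr n : vat (fun f => a f * c) n = vat a n * c.
  by rewrite /vat; case: insub => //; rewrite mul0r.
by rewrite /refine !vat_mulr; repeat case: ifP.
Qed.

Lemma refine00 d (a : 'I_d -> R) (k : 'I_d) (j : 'I_d.+1) :
  (j == k :> nat) || (j == k.+1 :> nat) -> refine a k 0 0 j = 0.
Proof.
rewrite /refine => /orP[]/eqP->; first by rewrite ltnn eqxx.
by rewrite ltnNge leqnSn (gtn_eqF (ltnSn k)) eqxx.
Qed.

Definition merge01 d (b : 'I_d.+2 -> R) (g : 'I_d.+1) : R :=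
  (if g == ord0 then b ord0 else 0) + b (lift ord0 g).

Lemma sum_merge01 d (b : 'I_d.+2 -> R) : \sum_g merge01 b g = \sum_g b g.
Proof.
rewrite big_split [RHS]big_ord_recl; congr (_ + _).
by rewrite big_ord_recl eqxx big1 //= addr0.
Qed.

Lemma refine_merge01 d (b : 'I_d.+2 -> R) :
  refine (merge01 b) ord0 (b ord0) (b (lift ord0 ord0)) = b.
Proof.
apply: functional_extensionality => -[[|[|j]] lt_j] /=; rewrite /refine /=.
- by congr b; apply: val_inj.
- by congr b; apply: val_inj.
rewrite /vat insubT /merge01 /= add0r; congr b; exact: val_inj.
Qed.

End Refine.

Section Uniqueness.
Variable R : realFieldType.
Variable Psi : forall d : nat, ('I_d -> R) -> 'I_d -> R.
Arguments Psi : clear implicits.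
Hypothesis Psi_simplex : forall (d : nat) (a : 'I_d -> R),
  nonneg_nonzero a -> in_simplex (Psi d a).
Hypothesis Psi_refine : refinement_consistent Psi.

Lemma Psi_refine_proportional d (a : 'I_d -> R) k r q :
  nonneg_nonzero a -> 0 <= r -> 0 <= q -> r + q = a k ->
  (forall f, Psi d a f = a f / \sum_g a g) ->
  forall j, Psi d.+1 (refine a k r q) j = refine a k r q j / \sum_g a g.
Proof.
move=> a_nnz r_ge0 q_ge0 rq_ak Psi_a.
have [Psi_pos Psi_zero] := Psi_refine a_nnz r_ge0 q_ge0 rq_ak.
have {}Psi_a : Psi d a = fun f => a f / \sum_g a g.
  exact: functional_extensionality.
have [ak0 | ak_gt0] := eqVneq (a k) 0; last first.
  have {}ak_gt0 : 0 < a k by rewrite lt0r ak_gt0 a_nnz.1.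
  move=> j; rewrite (Psi_pos ak_gt0) Psi_a -refine_mulr.
  by rewrite !mulrA !divfK ?gt_eqF.
have /andP[/eqP r0 /eqP q0] : (r == 0) && (q == 0) by rewrite -paddr_eq0 ?rq_ak ?ak0.
rewrite {}r0 {}q0 in Psi_zero *.
have [Psi_other [Psi_k Psi_k1]] := Psi_zero ak0.
move=> j; have [jk | j_not_k] := boolP ((j == k :> nat) || (j == k.+1 :> nat)).
  rewrite refine00 // mul0r.
  by case/orP: jk => /eqP jk; rewrite -[j]inord_val jk; [exact: Psi_k | exact: Psi_k1].
case/norP: j_not_k => j_not_k j_not_k1.
by rewrite Psi_other // Psi_a -refine_mulr !mul0r.
Qed.

Lemma Psi_proportional d (a : 'I_d -> R) :
  (forall f, 0 <= a f) -> 0 < \sum_g a g ->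
  forall f, Psi d a f = a f / \sum_g a g.
Proof.
case: d a => [|d] a; first by move=> _ _ [].
elim: d a => [|d IH] b b_ge0 sum_gt0.
  have [_] := Psi_simplex (nonneg_nonzero_sum_gt0 b_ge0 sum_gt0).
  move: sum_gt0; rewrite !big_ord1 => b0_gt0 Psi_b0 f.
  by rewrite ord1 Psi_b0 divff ?gt_eqF.
have merge_ge0 g : 0 <= merge01 b g.
  by rewrite addr_ge0 //; case: ifP.
have sum_merge_gt0 : 0 < \sum_g merge01 b g by rewrite sum_merge01.
rewrite -(sum_merge01 b) -{1 2}(refine_merge01 b).
apply: Psi_refine_proportional; rewrite ?eqxx //.
- exact: nonneg_nonzero_sum_gt0.
- exact: IH.
Qed.

End Uniqueness.

Theorem corollary4p2 (R : realFieldType)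
  (Psi : forall d : nat, ('I_d -> R) -> 'I_d -> R)
  (Hsimplex : forall (d : nat) (a : 'I_d -> R),
      nonneg_nonzero a -> in_simplex (Psi d a))
  (Hrefine : refinement_consistent Psi)
  (n d : nat) (x : 'I_n -> 'I_d -> R) (w : 'I_d -> R) (i j : 'I_n)
  (HZ : 0 < Zpair w (x i) (x j)) :
  forall f : 'I_d,
    Psi d (fun g => `|Delta w (x i) (x j) g|) f = rho w (x i) (x j) f.
Proof.
by move=> f; apply: (Psi_proportional Hsimplex Hrefine).
Qed.
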